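(* Let $H \in \mathbb{N}_+$, $\bar{R} > 0$, let $\mathcal{S}$ be a state space and $\mathcal{A}$ an action space with $|\mathcal{A}| = 2$ (identified with $\{0,1\}$) and $|\mathcal{S}| \geq 2^H$, and let $\mathcal{C}$ be a feature space. For any policy class $\Theta$ (each $\theta \in \Theta$ giving a map $\mu_\theta : \mathcal{C} \to \{0,1\}$) and any number of episodes $T$, \[ \inf_{\mathsf{Alg} \in \mathcal{D}} \ \sup_{\mathcal{M} \in \mathcal{H}(\Theta)} \mathcal{R}_T(\mathsf{Alg}; \mathcal{M}) \;\geq\; \frac{\bar{R}}{4}\left( \dim_L(\Theta) \wedge 2^H \wedge T - 1 \right), \] where $\wedge$ denotes minimum.
   Context: A deterministic system of horizon $H$ consists of a state space $\mathcal{S}$, action space $\mathcal{A}=\{0,1\}$, a fixed initial state $s_0$, a deterministic transition function $F : \mathcal{S}\times\mathcal{A}\times[H]\to\mathcal{S}$, a deterministic nonnegative reward function $R$ on $\mathcal{S}\times\mathcal{A}\times[H]$, and a feature map assigning to each pair $(s,h)\in\mathcal{S}\times[H]$ a feature vector $\phi_{s,h}\in\mathcal{C}$. Each $\theta\in\Theta$ induces the deterministic policy $(s,h)\mapsto \mu_\theta(\phi_{s,h})$. An episode starts at $s_0$ and runs for $H$ epochs; its total reward is the sum of the rewards collected. $\mathcal{H}(\Theta)$ denotes the class of such $H$-epoch deterministic systems (over $\mathcal{S},\mathcal{A},\mathcal{C}$) in which the total reward of any policy in an episode is at most $\bar{R}$, and whose optimal policy is unique and equals the policy induced by some $\theta^*\in\Theta$.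 $\mathcal{D}$ denotes the class of deterministic learning algorithms: deterministic maps from the entire observation history (observed states/features, actions taken, rewards received in all previous epochs and episodes) to an action in $\mathcal{A}$. For $T$ episodes, the regret of $\mathsf{Alg}$ on $\mathcal{M}$ is $\mathcal{R}_T(\mathsf{Alg};\mathcal{M}) = \sum_{t=1}^T \big( V^*(s_0) - \sum_{h} R_h^{(t)}(\mathsf{Alg})\big)$, where $V^*(s_0)$ is the optimal total reward from $s_0$ and $R_h^{(t)}(\mathsf{Alg})$ is the reward obtained at epoch $h$ of episode $t$. The Littlestone dimension $\dim_L(\Theta)$ is the largest $D$ such that there exists a complete binary tree of depth $D$ whose nodes $v$ are labeled by feature vectors $\phi^{(v)}\in\mathcal{C}$ with the property: for every root-to-leaf path $v_1,\dots,v_D$, letting $b_{v_i}\in\{0,1\}$ denote the direction (left $=0$, right $=1$) taken from $v_i$ along the path, there exists $\theta\in\Theta$ with $\mu_\theta(\phi^{(v_i)}) = b_{v_i}$ for all $i\in[D]$. *)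

From HB Require Import structures.
From mathcomp Require Import all_boot all_order all_algebra.
From mathcomp Require Import reals.
Set Implicit Arguments. Unset Strict Implicit. Unset Printing Implicit Defensive.
Import Order.TTheory GRing.Theory Num.Theory.
Local Open Scope ring_scope.

(* Action space A = {0,1} is represented by bool (false = 0, true = 1).
   Epochs are indexed 0, ..., H-1 (h : nat, only h < H is ever used). *)

Record dsys (S C : Type) (R : Type) := DSys {
  s0    : S;
  trans : S -> bool -> nat -> S;
  rew   : S -> bool -> nat -> R;
  feat  : S -> nat -> C
}.

Section Sys.
Variables (R : realType) (S C : Type).
Implicit Types (M : dsys S C R).

Definition policy := S -> nat -> bool.

Fixpoint ret_from M (pi : policy) (k h : nat) (s : S) : R :=
  match k with
  | 0 => 0
  | k'.+1 => let a := pi s h in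
             rew M s a h + ret_from M pi k' h.+1 (trans M s a h)
  end.

Fixpoint acts_from M (pi : policy) (k h : nat) (s : S) : seq bool :=
  match k with
  | 0 => [::]
  | k'.+1 => let a := pi s h in a :: acts_from M pi k' h.+1 (trans M s a h)
  end.

Definition value M (H : nat) (pi : policy) : R := ret_from M pi H 0 (s0 M).

Definition pol_of (Theta : Type) (mu : Theta -> C -> bool) M (th : Theta)
  : policy := fun s h => mu th (feat M s h).

(* Uniqueness is understood along
   the episode: every optimal policy takes the same actions from s0 as
   pi_{theta*} (behaviour on unreached (s,h) does not affect anything). *)
Definition in_class (Theta : Type) (mu : Theta -> C -> bool) (H : nat)
  (Rbar : R) M : Prop :=
  (forall s a h, (h < H)%N -> 0 <= rew M s a h) /\
  (forall pi : policy, value M H pi <= Rbar) /\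
  exists thstar : Theta,
    (forall pi : policy, value M H pi <= value M H (pol_of mu M thstar)) /\
    (forall pi : policy, value M H pi = value M H (pol_of mu M thstar) ->
        acts_from M pi H 0 (s0 M) = acts_from M (pol_of mu M thstar) H 0 (s0 M)).

Definition opt_value M (H : nat) (v : R) : Prop :=
  (exists pi : policy, value M H pi = v) /\ (forall pi : policy, value M H pi <= v).

Definition obs := (S * C * bool * R)%type.

(* Deterministic learning algorithm: a map from the entire observation history
   (all previous epochs of all previous episodes and of the current episode)
   and the current state/feature to an action. *)
Definition algo := seq obs -> S -> C -> bool.

Fixpoint run_ep M (alg : algo) (k h : nat) (s : S) (hist : seq obs) : seq obs :=
  match k with
  | 0 => hist
  | k'.+1 =>
      let c := feat M s h in
      let a := alg hist s c in
      run_ep M alg k' h.+1 (trans M s a h) (rcons hist (s, c, a, rew M s a h))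
  end.

Fixpoint run M (alg : algo) (H t : nat) : seq obs :=
  match t with
  | 0 => [::]
  | t'.+1 => run_ep M alg H 0 (s0 M) (run M alg H t')
  end.

(* Rewards collected in episode t (1-based), i.e. R_h^{(t)} for h in [H]. *)
Definition ep_reward M (alg : algo) (H t : nat) : R :=
  \sum_(o <- drop ((t.-1) * H) (run M alg H t)) o.2.

Definition regret M (alg : algo) (H T : nat) (vstar : R) : R :=
  \sum_(1 <= t < T.+1) (vstar - ep_reward M alg H t).

End Sys.

(* Littlestone shattering: a complete binary tree of depth D whose node reached
   by the direction prefix p (p : seq bool of length i < D) is labelled lab p,
   such that for every root-to-leaf path (directions b_0..b_{D-1}) some theta
   realizes mu theta (phi^{(v_i)}) = b_i for all i < D.
   dim_L(Theta) >= D  iff  ltree_shattered mu D. *)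
Definition ltree_shattered (Theta C : Type) (mu : Theta -> C -> bool) (D : nat)
  : Prop :=
  exists lab : seq bool -> C,
    forall path : seq bool, size path = D ->
      exists th : Theta, forall i, (i < D)%N ->
        mu th (lab (take i path)) = nth false path i.

From HB Require Import structures.
From mathcomp Require Import all_boot all_order all_algebra.
From mathcomp Require Import reals.
From mathcomp Require Import zify lra.
From Stdlib Require Import ClassicalEpsilon.
Set Implicit Arguments. Unset Strict Implicit. Unset Printing Implicit Defensive.
Import Order.TTheory GRing.Theory Num.Theory.
Local Open Scope ring_scope.

(* Embed the binary tree of action sequences of length < H into the state
   space, so that the state remembers the actions taken so far in the episode,
   and pay Rbar only at the end of one hidden leaf B.  Run against zero
   rewards, the first K - 1 episodes of the algorithm (K = min(D, 2^H, T))
   reach at most K - 1 nodes of depth d = min(D, H); as K <= 2^d, some node b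
   is missed, and the shattered tree provides a theta whose policy follows a
   leaf B below b.  With the reward hidden at B the algorithm observes only
   zeros in those episodes, so it behaves exactly as against zero rewards and
   loses Rbar in each of them. *)

Section Episodes.
Variables (R : realType) (S C : Type) (M : dsys S C R) (alg : algo R S C).
Variable H : nat.

Fixpoint alg_acts (k h : nat) (s : S) (hist : seq (obs R S C)) : seq bool :=
  match k with
  | 0 => [::]
  | k'.+1 =>
      let c := feat M s h in
      let a := alg hist s c in
      a :: alg_acts k' h.+1 (trans M s a h) (rcons hist (s, c, a, rew M s a h))
  end.

Definition episode_acts (t : nat) : seq bool :=
  alg_acts H 0 (s0 M) (run M alg H t).

Lemma run_ep_extends k h s hist :
  exists2 l, run_ep M alg k h s hist = hist ++ l & size l = k.
Proof.
elim: k h s hist => [|k IH] h s hist /=; first by exists [::]; rewrite ?cats0.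
set o := (_, _, _, _).
have [l -> <-] := IH h.+1 (trans M s (alg hist s (feat M s h)) h) (rcons hist o).
by exists (o :: l); rewrite ?cat_rcons.
Qed.

Lemma size_run t : size (run M alg H t) = (t * H)%N.
Proof.
elim: t => [|t IH] //=.
have [l -> l_size] := run_ep_extends H 0 (s0 M) (run M alg H t).
by rewrite size_cat IH l_size mulSn addnC.
Qed.

Lemma ep_rewardS t :
  ep_reward M alg H t.+1 =
  \sum_(o <- run M alg H t.+1) o.2 - \sum_(o <- run M alg H t) o.2.
Proof.
rewrite /ep_reward /=.
have [l -> _] := run_ep_extends H 0 (s0 M) (run M alg H t).
by rewrite drop_size_cat ?size_run // big_cat /= addrC addrK.
Qed.

Lemma regret_ge_missed (vstar : R) (T m : nat) : (m <= T)%N ->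
  (forall t, (0 < t <= T)%N -> ep_reward M alg H t <= vstar) ->
  (forall t, (0 < t <= m)%N -> ep_reward M alg H t = 0) ->
  vstar *+ m <= regret M alg H T vstar.
Proof.
move=> mT le_vstar missed.
rewrite /regret (big_cat_nat _ (n := m.+1)) //=.
rewrite (eq_big_nat _ _ (F2 := fun=> vstar)); last first.
  by move=> t /andP[t_gt0 t_le]; rewrite missed ?subr0 // t_gt0.
rewrite sumr_const_nat subn1 /= lerDl.
rewrite big_nat_cond; apply: sumr_ge0 => t /andP[/andP[m_lt t_le] _].
by rewrite subr_ge0 le_vstar //; apply/andP; split; lia.
Qed.

End Episodes.

Section TreeSystem.
Variables (R : realType) (S C : Type) (H : nat).
Variables (e : seq bool -> S) (r : S -> seq bool) (phi : seq bool -> nat -> C).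
Hypothesis r_e : forall q, (size q < H)%N -> r (e q) = q.

Definition tree_sys (rw : seq bool -> R) : dsys S C R :=
  DSys (e [::]) (fun s a _ => e (rcons (r s) a))
    (fun s a _ => rw (rcons (r s) a)) (fun s h => phi (r s) h).

Definition terminal (rw : seq bool -> R) := forall q, (size q < H)%N -> rw q = 0.

Definition follows (B : seq bool) (pi : policy S) :=
  forall i, (i < H)%N -> pi (e (take i B)) i = nth false B i.

Section Terminal.
Variable rw : seq bool -> R.
Hypothesis rw_terminal : terminal rw.

(* The summand [rw q] vanishes unless [k = 0], where it makes the identity
   hold. *)
Lemma tree_ret_from pi k h q : (size q + k = H)%N ->
  rw q + ret_from (tree_sys rw) pi k h (e q) =
  rw (q ++ acts_from (tree_sys rw) pi k h (e q)).
Proof.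
elim: k h q => [|k IH] h q qk /=; first by rewrite addr0 cats0.
have qH : (size q < H)%N by lia.
rewrite r_e // (rw_terminal qH) add0r.
by rewrite IH ?size_rcons ?cat_rcons //; lia.
Qed.

Lemma tree_value pi : (0 < H)%N ->
  value (tree_sys rw) H pi = rw (acts_from (tree_sys rw) pi H 0 (e [::])).
Proof.
move=> H_gt0; have := tree_ret_from pi 0 (k := H) (q := [::]) (erefl H).
by rewrite rw_terminal // add0r.
Qed.

Lemma tree_run_ep alg k h q hist : (size q + k = H)%N ->
  rw q + \sum_(o <- run_ep (tree_sys rw) alg k h (e q) hist) o.2 =
  \sum_(o <- hist) o.2 + rw (q ++ alg_acts (tree_sys rw) alg k h (e q) hist).
Proof.
elim: k h q hist => [|k IH] h q hist qk /=; first by rewrite addrC cats0.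
have qH : (size q < H)%N by lia.
rewrite r_e // (rw_terminal qH) add0r.
set a := alg _ _ _.
have := IH h.+1 (rcons q a) (rcons hist (e q, phi q h, a, rw (rcons q a))).
rewrite size_rcons big_rcons cat_rcons /= => IH'.
by apply: (addrI (rw (rcons q a))); rewrite IH' ?addrA ?(addrC (rw _)) //; lia.
Qed.

Lemma tree_ep_reward alg t : (0 < H)%N ->
  ep_reward (tree_sys rw) alg H t.+1 = rw (episode_acts (tree_sys rw) alg H t).
Proof.
move=> H_gt0; rewrite ep_rewardS /=.
have := tree_run_ep alg 0 (k := H) (q := [::]) (run (tree_sys rw) alg H t).
move=> /(_ (erefl H)).
by rewrite rw_terminal // add0r => ->; rewrite addrC addKr.
Qed.

End Terminal.

Lemma tree_run_ep_agree rw1 rw2 alg k h q hist :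
  terminal rw1 -> terminal rw2 -> (size q + k = H)%N ->
  rw1 (q ++ alg_acts (tree_sys rw2) alg k h (e q) hist) =
    rw2 (q ++ alg_acts (tree_sys rw2) alg k h (e q) hist) ->
  run_ep (tree_sys rw1) alg k h (e q) hist =
    run_ep (tree_sys rw2) alg k h (e q) hist.
Proof.
move=> term1 term2; elim: k h q hist => [|k IH] h q hist qk //=.
rewrite r_e; last by lia.
set a := alg _ _ _ => agree.
have -> : rw1 (rcons q a) = rw2 (rcons q a).
  case: k {IH} qk agree => [|k] qk agree; first by rewrite -cats1.
  by rewrite term1 ?term2 // size_rcons; lia.
by apply: IH; rewrite ?size_rcons ?cat_rcons //; lia.
Qed.

Lemma tree_run_agree rw1 rw2 alg n : (0 < H)%N ->
  terminal rw1 -> terminal rw2 ->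
  (forall t, (t < n)%N -> rw1 (episode_acts (tree_sys rw2) alg H t) =
                          rw2 (episode_acts (tree_sys rw2) alg H t)) ->
  forall t, (t <= n)%N -> run (tree_sys rw1) alg H t = run (tree_sys rw2) alg H t.
Proof.
move=> H_gt0 term1 term2 agree; elim=> [|t IH] // tn /=.
rewrite IH; last by lia.
by apply: (tree_run_ep_agree (q := [::])) => //; apply: agree.
Qed.

Lemma tree_acts_follow rw B pi : size B = H -> follows B pi ->
  acts_from (tree_sys rw) pi H 0 (e [::]) = B.
Proof.
move=> B_size B_pi.
suff acts_drop k i : (i + k = H)%N ->
    acts_from (tree_sys rw) pi k i (e (take i B)) = drop i B.
  by have := acts_drop H 0; rewrite take0 drop0; apply.
elim: k i => [|k IH] i ik /=; first by rewrite drop_oversize //; lia.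
have iB : (i < size B)%N by lia.
rewrite r_e ?size_takel; try lia.
by rewrite B_pi -?(take_nth false iB) ?IH -?(drop_nth false iB) //; lia.
Qed.

Lemma follows_pol_of (Theta : Type) (mu : Theta -> C -> bool) th rw B :
  size B = H ->
  (forall i, (i < H)%N -> mu th (phi (take i B) i) = nth false B i) ->
  follows B (pol_of mu (tree_sys rw) th).
Proof.
move=> B_size B_th i iH; rewrite /pol_of /= r_e ?B_th //.
by rewrite size_takel // B_size ltnW.
Qed.

Section Jackpot.
Variables (Rbar : R) (B : seq bool).
Hypotheses (Rbar_gt0 : 0 < Rbar) (H_gt0 : (0 < H)%N) (B_size : size B = H).

Definition jackpot (q : seq bool) : R := if q == B then Rbar else 0.

Lemma jackpot_terminal : terminal jackpot.
Proof. by move=> q; rewrite /jackpot; case: eqP => // ->; rewrite B_size ltnn.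
Qed.

Lemma jackpot_ge0 q : 0 <= jackpot q.
Proof. by rewrite /jackpot; case: ifP => // _; apply: ltW. Qed.

Lemma jackpot_le q : jackpot q <= Rbar.
Proof. by rewrite /jackpot; case: ifP => // _; apply: ltW. Qed.

Lemma jackpot_value_le pi : value (tree_sys jackpot) H pi <= Rbar.
Proof. by rewrite (tree_value jackpot_terminal) ?jackpot_le. Qed.

Lemma jackpot_value_follows pi :
  follows B pi -> value (tree_sys jackpot) H pi = Rbar.
Proof.
move=> B_pi; rewrite (tree_value jackpot_terminal) //.
by rewrite (tree_acts_follow _ B_size B_pi) /jackpot eqxx.
Qed.

Lemma jackpot_value_eq pi :
  value (tree_sys jackpot) H pi = Rbar ->
  acts_from (tree_sys jackpot) pi H 0 (e [::]) = B.
Proof.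
rewrite (tree_value jackpot_terminal) // {1}/jackpot; case: eqP => // _ Rbar0.
by move: Rbar_gt0; rewrite Rbar0 ltxx.
Qed.

Lemma jackpot_opt_value pi : follows B pi -> opt_value (tree_sys jackpot) H Rbar.
Proof.
move=> B_pi; split; last exact: jackpot_value_le.
by exists pi; apply: jackpot_value_follows.
Qed.

Lemma jackpot_in_class (Theta : Type) (mu : Theta -> C -> bool) th :
  follows B (pol_of mu (tree_sys jackpot) th) ->
  in_class mu H Rbar (tree_sys jackpot).
Proof.
move=> B_th; split; first by move=> s a h _; apply: jackpot_ge0.
split; first exact: jackpot_value_le.
exists th; rewrite jackpot_value_follows //; split; first exact: jackpot_value_le.
by move=> pi /jackpot_value_eq ->; rewrite (tree_acts_follow _ B_size B_th).
Qed.

Lemma jackpot_ep_reward_le alg t :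
  (0 < t)%N -> ep_reward (tree_sys jackpot) alg H t <= Rbar.
Proof.
by case: t => // t _; rewrite (tree_ep_reward jackpot_terminal) ?jackpot_le.
Qed.

Lemma jackpot_ep_reward_unseen alg n :
  (forall t, (t < n)%N -> episode_acts (tree_sys (fun=> 0)) alg H t != B) ->
  forall t, (0 < t <= n)%N -> ep_reward (tree_sys jackpot) alg H t = 0.
Proof.
move=> unseen [|t] // /andP[_ tn].
have zero_terminal : terminal (fun=> 0 : R) by [].
have -> : ep_reward (tree_sys jackpot) alg H t.+1 =
          ep_reward (tree_sys (fun=> 0)) alg H t.+1.
  rewrite /ep_reward.
  rewrite (tree_run_agree (n := n) H_gt0 jackpot_terminal zero_terminal) //.
  by move=> t' t'n; rewrite /jackpot (negbTE (unseen t' t'n)).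
by rewrite (tree_ep_reward zero_terminal).
Qed.

Lemma jackpot_regret alg T n : (n <= T)%N ->
  (forall t, (t < n)%N -> episode_acts (tree_sys (fun=> 0)) alg H t != B) ->
  Rbar *+ n <= regret (tree_sys jackpot) alg H T Rbar.
Proof.
move=> nT unseen; apply: regret_ge_missed => // [t /andP[t_gt0 _]|].
  exact: jackpot_ep_reward_le.
exact: jackpot_ep_reward_unseen.
Qed.

End Jackpot.
End TreeSystem.

Fixpoint prefix_code (q : seq bool) : nat :=
  if q is a :: q' then (a + (prefix_code q').*2)%N else 1%N.

Lemma prefix_code_gt0 q : (0 < prefix_code q)%N.
Proof. by elim: q => [|a q IH] //=; lia. Qed.

Lemma prefix_code_inj : injective prefix_code.
Proof.
elim=> [|a q IH] [|a' q'] //=.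
- by have := prefix_code_gt0 q'; lia.
- by have := prefix_code_gt0 q; lia.
move=> eq_code; have [-> eq_q] : a = a' /\ prefix_code q = prefix_code q'.
  by case: a a' eq_code => [] [] /=; lia.
by rewrite (IH _ eq_q).
Qed.

Lemma prefix_code_lt q : (prefix_code q < 2 ^ (size q).+1)%N.
Proof. by elim: q => [|a q IH] //=; rewrite expnS; lia. Qed.

Lemma prefix_embedding (S : Type) (H : nat) :
  (exists f : 'I_(2 ^ H) -> S, injective f) ->
  exists (e : seq bool -> S) (r : S -> seq bool),
    forall q, (size q < H)%N -> r (e q) = q.
Proof.
case=> f f_inj; have pow_gt0 : (0 < 2 ^ H)%N by rewrite expn_gt0.
pose e q := f (insubd (Ordinal pow_gt0) (prefix_code q)).
have code_lt q : (size q < H)%N -> (prefix_code q < 2 ^ H)%N.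
  by move=> qH; apply: leq_trans (prefix_code_lt q) _; rewrite leq_exp2l.
have e_inj q q' : (size q < H)%N -> (size q' < H)%N -> e q = e q' -> q = q'.
  move=> qH q'H /f_inj /(congr1 val); rewrite !val_insubd !code_lt //.
  exact: prefix_code_inj.
exists e, (fun s => epsilon (inhabits [::]) (fun q => (size q < H)%N /\ e q = s)).
move=> q qH; have [q'H e_q'] := epsilon_spec (inhabits [::])
  (fun q' => (size q' < H)%N /\ e q' = e q) (ex_intro _ q (conj qH erefl)).
exact: e_inj.
Qed.

Lemma shattered_prefix (Theta C : Type) (mu : Theta -> C -> bool) D
    (lab : seq bool -> C) :
  (forall path : seq bool, size path = D -> exists th : Theta,
     forall i, (i < D)%N -> mu th (lab (take i path)) = nth false path i) ->
  forall b : seq bool, (size b <= D)%N -> exists th : Theta,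
    forall i, (i < size b)%N -> mu th (lab (take i b)) = nth false b i.
Proof.
move=> shattered b bD.
have [|th th_path] := shattered (b ++ nseq (D - size b) false).
  by rewrite size_cat size_nseq; lia.
exists th => i ib; have := th_path i (leq_trans ib bD).
by rewrite takel_cat ?nth_cat ?ib // ltnW.
Qed.

(* The shattered tree says nothing below depth D, so there the feature is
   constant and every policy repeats a single action. *)
Definition depth_feature (C : Type) (lab : seq bool -> C) (D : nat)
  (q : seq bool) (h : nat) : C :=
  if (h < D)%N then lab q else lab [::].

Lemma shattered_leaf (Theta C : Type) (mu : Theta -> C -> bool) D H
    (lab : seq bool -> C) :
  (forall path : seq bool, size path = D -> exists th : Theta,
     forall i, (i < D)%N -> mu th (lab (take i path)) = nth false path i) ->
  forall b : seq bool, size b = minn D H -> exists th (B : seq bool),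
    [/\ size B = H, take (minn D H) B = b &
        forall i, (i < H)%N ->
          mu th (depth_feature lab D (take i B) i) = nth false B i].
Proof.
move=> shattered b b_size.
have bD : (size b <= D)%N by rewrite b_size geq_minl.
have [th th_b] := shattered_prefix (mu := mu) (lab := lab) shattered bD.
exists th, (b ++ nseq (H - minn D H) (mu th (lab [::]))); split.
- by rewrite size_cat size_nseq b_size; lia.
- by rewrite -b_size take_size_cat.
move=> i iH; rewrite /depth_feature nth_cat b_size; case: ltnP => iD.
  have ib : (i < minn D H)%N by rewrite leq_min iD.
  by rewrite ib takel_cat ?b_size 1?ltnW // th_b ?b_size.
have -> : (i < minn D H)%N = false by apply/negbTE; rewrite -leqNgt; lia.
by rewrite nth_nseq; have -> : (i - minn D H < H - minn D H)%N by lia.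
Qed.

Lemma exists_seq_notin n (L : seq (seq bool)) :
  (size L < 2 ^ n)%N -> exists2 b : seq bool, size b = n & b \notin L.
Proof.
move=> L_small; case: (boolP [exists t : n.-tuple bool, tval t \notin L]).
  by case/existsP=> t t_L; exists (tval t); rewrite ?size_tuple.
rewrite negb_exists => /forallP all_in; move: L_small; rewrite ltnNge.
have <- : size (map val (enum {: n.-tuple bool})) = (2 ^ n)%N.
  by rewrite size_map -cardE card_tuple card_bool.
case/negP; apply: uniq_leq_size.
  by rewrite map_inj_uniq ?enum_uniq //; apply: val_inj.
by move=> _ /mapP[t _ ->]; have := all_in t; rewrite negbK.
Qed.

Lemma minn_pred_lt_exp2 D H T : ((minn (minn D (2 ^ H)) T).-1 < 2 ^ minn D H)%N.
Proof.
have le_exp2 : (minn D (2 ^ H) <= 2 ^ minn D H)%N.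
  case: (leqP D H) => _; last exact: geq_minr.
  exact: leq_trans (geq_minl _ _) (ltnW (ltn_expl _ (ltnSn 1))).
by have := geq_minl (minn D (2 ^ H)) T; have := expn_gt0 2 (minn D H); lia.
Qed.

Lemma quarter_pred_lt (F : realFieldType) (x eps : F) (k : nat) :
  0 < x -> 0 < eps -> x / 4%:R * (k%:R - 1) - eps < x *+ k.-1.
Proof.
move=> x_gt0 eps_gt0; rewrite -mulr_natr.
have k_pred : (k%:R - 1 : F) <= k.-1%:R.
  by case: k => [|k] /=; [rewrite sub0r lerN10 | rewrite -addn1 natrD addrK].
have : x / 4%:R * (k%:R - 1) <= x / 4%:R * k.-1%:R.
  by apply: ler_wpM2l k_pred; rewrite divr_ge0 // ltW.
have : x / 4%:R * k.-1%:R <= x * k.-1%:R.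
  by apply: ler_wpM2r; [apply: ler0n | lra].
lra.
Qed.

Theorem theorem3 (R : realType) (S C Theta : Type) (mu : Theta -> C -> bool)
  (H : nat) (Rbar : R) (T : nat)
  (hH : (0 < H)%N) (hRbar : 0 < Rbar)
  (hS : exists f : 'I_(2 ^ H) -> S, injective f)
  (D : nat) (hD : ltree_shattered mu D) :
  forall alg : algo R S C, forall eps : R, 0 < eps ->
    exists M : dsys S C R, exists vstar : R,
      in_class mu H Rbar M /\ opt_value M H vstar /\
      Rbar / 4%:R * ((minn (minn D (2 ^ H)) T)%:R - 1) - eps
        < regret M alg H T vstar.
Proof.
move=> alg eps eps_gt0.
have [e [r r_e]] := prefix_embedding hS.
have [lab shattered] := hD.
set K := minn (minn D (2 ^ H)) T.
pose phi := depth_feature lab D.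
pose M0 := tree_sys e r phi (fun=> 0 : R).
pose seen := [seq take (minn D H) (episode_acts M0 alg H t) | t <- iota 0 K.-1].
have [b b_size b_unseen] : exists2 b, size b = minn D H & b \notin seen.
  by apply: exists_seq_notin; rewrite size_map size_iota minn_pred_lt_exp2.
have [th [B [B_size B_b B_th]]] :=
  shattered_leaf (mu := mu) (lab := lab) shattered b_size.
have th_follows := follows_pol_of r_e (jackpot Rbar B) B_size B_th.
exists (tree_sys e r phi (jackpot Rbar B)), Rbar; split; [|split].
- exact: (jackpot_in_class r_e hRbar hH B_size th_follows).
- exact: (jackpot_opt_value phi r_e hRbar hH B_size th_follows).
apply: lt_le_trans (quarter_pred_lt K hRbar eps_gt0) _.
apply: (jackpot_regret r_e hRbar hH B_size).
- exact: leq_trans (leq_pred _) (geq_minr _ _).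
move=> t tK; apply: contraNneq b_unseen => acts_B; apply/mapP.
by exists t; rewrite ?mem_iota ?acts_B ?B_b.
Qed.
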